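(* Let $p=2m\ge 4$ be even, let $\Delta$ be the distance squared matrix of the cycle $C_p$, and let $\lambda$ be the largest eigenvalue of $\Delta$. Let $B$ be the $p\times p$ circulant matrix with entries $B_{ij}=2\lambda$ if $d_{ij}=m$ (i.e. $j$ is antipodal to $i$ on the cycle), $B_{ij}=-\lambda$ if $d_{ij}=m-1$, and $B_{ij}=0$ otherwise; equivalently its first row is $(\mathbf 0^T,-\lambda,2\lambda,-\lambda,\mathbf 0^T)$ with zero blocks of sizes $m-1$ and $m-2$. Then $\Delta$ is invertible and \[ \Delta^{-1}=\frac{1}{4\lambda m}\left(2J+B\right), \] where $J$ is the $p\times p$ all-ones matrix.
   Context: For a connected graph with vertices $1,\dots,n$, the distance squared matrix is the matrix with $(i,j)$ entry $d_{ij}^2$, where $d_{ij}$ is the graph distance between $i$ and $j$. The vertices of $C_p$ are labeled $1,\dots,p$ in cyclic order. *)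

From mathcomp Require Import all_boot all_order all_algebra.
Set Implicit Arguments. Unset Strict Implicit. Unset Printing Implicit Defensive.
Import Order.TTheory GRing.Theory Num.Theory.
Local Open Scope ring_scope.

(* Graph distance in the cycle C_p, vertices labelled 0..p-1 in cyclic order
   (the paper's vertex k+1 is our index k). *)
Definition cycle_dist (p : nat) (i j : 'I_p) : nat :=
  minn `|i - j|%N (p - `|i - j|%N).

Definition cycle_dist_sq_mx (R : nzRingType) (p : nat) : 'M[R]_p :=
  \matrix_(i, j) ((cycle_dist i j) ^ 2)%N%:R.

Definition largest_eigenvalue (F : numFieldType) (n : nat) (A : 'M[F]_n) (l : F) :=
  eigenvalue A l /\ forall mu, eigenvalue A mu -> mu <= l.

Definition B_mx (R : nzRingType) (m : nat) (l : R) : 'M[R]_(m.*2) :=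
  \matrix_(i, j)
    (if cycle_dist i j == m then 2 * l
     else if cycle_dist i j == m.-1 then - l else 0).

From mathcomp Require Import all_boot all_order all_algebra.
From mathcomp Require Import zify ring lra.
Import Order.TTheory GRing.Theory Num.Theory.
Local Open Scope ring_scope.

(* All column sums of the distance squared matrix equal s = sum_k d(0,k)^2.
   Hence the all-ones vector is an eigenvector for s, and since the matrix is
   entrywise nonnegative no eigenvalue exceeds s: lambda = s.  By symmetry
   also Delta J = lambda J.  Entry (i,j) of Delta B / lambda is 2 f(j+m) - f(j+m-1)
   - f(j+m+1) with f = d(i,.)^2, i.e. minus a second difference of a squared
   distance along the cycle: it is -2 except where the parabola peaks, at the
   antipode of i, i.e. for j = i, where it is 2m^2 - 2(m-1)^2 = 4m - 2.
   So Delta (2J + B) = 4 lambda m I. *)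

Section ColumnSums.
Variables (F : realFieldType) (n : nat) (A : 'M[F]_n) (s : F).
Hypothesis sum_colA : forall j, \sum_i A i j = s.

Lemma eigenvalue_colsum : (0 < n)%N -> eigenvalue A s.
Proof.
move=> n_gt0; apply/eigenvalueP; exists (const_mx 1).
  apply/matrixP => i j; rewrite !mxE -(sum_colA j) mulr1.
  by apply: eq_bigr => k _; rewrite mxE mul1r.
by apply/eqP => /matrixP /(_ 0 (Ordinal n_gt0)) /eqP; rewrite !mxE oner_eq0.
Qed.

Hypothesis A_ge0 : forall i j, 0 <= A i j.

Lemma eigenvalue_le_colsum mu : eigenvalue A mu -> mu <= s.
Proof.
move=> /eigenvalueP [v vA v_neq0].
have [i0 vi0_neq0] : exists i0, v 0 i0 != 0.
  apply/existsP; apply: contraR v_neq0; rewrite negb_exists => /forallP v0.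
  by apply/eqP/matrixP => a b; rewrite mxE (ord1 a); apply/eqP/negPn/v0.
have [i _ v_max] := @arg_maxP _ _ _ i0 xpredT (fun k => `|v 0 k|) isT.
have vi_gt0 : 0 < `|v 0 i| by apply: lt_le_trans (v_max i0 isT); rewrite normr_gt0.
have mu_vi : mu * v 0 i = \sum_k v 0 k * A k i.
  by move/matrixP: vA => /(_ 0 i); rewrite !mxE => <-.
suff : `|mu| * `|v 0 i| <= s * `|v 0 i| by rewrite ler_pM2r //; apply: ler_normlW.
rewrite -normrM mu_vi -(sum_colA i) mulr_suml.
apply: le_trans (ler_norm_sum _ _ _) _; apply: ler_sum => k _.
by rewrite normrM (ger0_norm (A_ge0 k i)) mulrC ler_wpM2l //; apply: v_max.
Qed.

Lemma largest_eigenvalue_colsum l : (0 < n)%N -> largest_eigenvalue A l -> l = s.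
Proof.
move=> n_gt0 [eig_l max_l]; apply/le_anti.
by rewrite eigenvalue_le_colsum // max_l // eigenvalue_colsum.
Qed.

End ColumnSums.

Lemma invmx_mulmx_scalar (F : fieldType) (n : nat) (A B : 'M[F]_n) (c : F) :
  c != 0 -> A *m B = c%:M -> A \in unitmx /\ invmx A = c^-1 *: B.
Proof.
move=> c_neq0 AB; have AB1 : A *m (c^-1 *: B) = 1%:M.
  by rewrite -scalemxAr AB scale_scalar_mx mulVf.
have [A_unit _] := mulmx1_unit AB1; split => //.
by rewrite -[LHS]mulmx1 -AB1 mulmxA mulVmx // mul1mx.
Qed.

Lemma sum_ord_rot (V : nmodType) (p a : nat) (F : nat -> V) : (0 < p)%N ->
  \sum_(k < p) F ((a + k) %% p)%N = \sum_(k < p) F k.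
Proof.
move=> p_gt0; have lt_p k : ((a + k) %% p < p)%N by rewrite ltn_pmod.
pose rot (k : 'I_p) := Ordinal (lt_p k).
have rot_inj : injective rot.
  move=> k1 k2 /(congr1 val) /= /eqP; rewrite eqn_modDl !modn_small // => /eqP.
  exact: val_inj.
by rewrite [RHS](reindex_inj rot_inj).
Qed.

Lemma sum_ord_mul_eqn (V : pzSemiRingType) (p a : nat) (F : nat -> V) : (a < p)%N ->
  \sum_(k < p) F k * (k == a :> nat)%:R = F a.
Proof.
move=> lt_ap; rewrite (bigD1 (Ordinal lt_ap)) //= eqxx mulr1 big1 ?addr0 // => k.
by rewrite -val_eqE /= => /negbTE ->; rewrite mulr0.
Qed.

Section CyclicDistance.
Local Open Scope nat_scope.

Definition cdist (p x : nat) : nat := minn (x %% p) (p - x %% p).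

Lemma eq_cdist p x y : x = y %[mod p] -> cdist p x = cdist p y.
Proof. by rewrite /cdist => ->. Qed.

Lemma cdist_modn p x : cdist p (x %% p) = cdist p x.
Proof. by apply: eq_cdist; rewrite modn_mod. Qed.

Lemma cdist_modnDl p x y : cdist p (x %% p + y) = cdist p (x + y).
Proof. by apply: eq_cdist; rewrite modnDml. Qed.

Lemma cdist_small p x : x < p -> cdist p x = minn x (p - x).
Proof. by move=> lt_xp; rewrite /cdist modn_small. Qed.

Lemma cycle_distE p (i j : 'I_p) : cycle_dist i j = cdist p (j + (p - i)).
Proof.
have lt_ip := ltn_ord i; have lt_jp := ltn_ord j.
rewrite /cycle_dist; have [le_ij | lt_ji] := leqP i j.
  rewrite distnEr // (@eq_cdist _ _ (j - i)) ?cdist_small; try lia.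
  by rewrite (_ : j + (p - i) = j - i + p) ?modnDr //; lia.
rewrite distnEl 1?ltnW // cdist_small; lia.
Qed.

Lemma cycle_distC p (i j : 'I_p) : cycle_dist i j = cycle_dist j i.
Proof. by rewrite /cycle_dist distnC. Qed.

Lemma dvdn_ord_sub p (i j : 'I_p) : (p %| j + (p - i)) = (i == j).
Proof.
have lt_ip := ltn_ord i; have lt_jp := ltn_ord j.
rewrite -val_eqE /=; have [le_ij | lt_ji] := leqP i j.
  rewrite (_ : j + (p - i) = j - i + p) ?(dvdn_addl _ (dvdnn p)) /dvdn ?modn_small; lia.
rewrite /dvdn modn_small; lia.
Qed.

Lemma cdist_lower_half m x : x <= m -> cdist m.*2 x = x.
Proof.
move=> le_xm; have [m0 | m_gt0] := posnP m.
  by move: le_xm; rewrite m0 leqn0 => /eqP ->.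
rewrite cdist_small; lia.
Qed.

Lemma cdist_upper_half m x : m <= x <= m.*2 -> cdist m.*2 x = m.*2 - x.
Proof.
move=> /andP[le_mx le_x2m]; have [-> | lt_x2m] := eqVneq x m.*2.
  by rewrite /cdist modnn subnn min0n.
rewrite cdist_small; lia.
Qed.

Lemma sqrn_second_diff a : a.+2 ^ 2 + a ^ 2 = 2 * a.+1 ^ 2 + 2.
Proof. nia. Qed.

Lemma cdist_sqr_second_diff_small m r : 0 < m -> r < m.*2 ->
  cdist m.*2 r.+2 ^ 2 + cdist m.*2 r ^ 2 + (r.+1 == m) * (4 * m) =
  2 * cdist m.*2 r.+1 ^ 2 + 2.
Proof.
move=> m_gt0 lt_r_2m.
have [lt_r1m | [eq_r1m | [/andP[le_mr lt_r2m] | eq_r1_2m]]] :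
    r.+1 < m \/ r.+1 = m \/ m <= r < m.*2.-1 \/ r.+1 = m.*2 by lia.
- rewrite !cdist_lower_half ?(ltn_eqF lt_r1m) ?addn0;
    [exact: sqrn_second_diff | lia..].
- subst m; rewrite (cdist_upper_half _ r.+2) ?(cdist_lower_half _ r)
    ?(cdist_lower_half _ r.+1) ?eqxx; lia.
- rewrite (gtn_eqF (_ : m < r.+1)) ?addn0 ?(cdist_upper_half m r)
    ?(cdist_upper_half m r.+1) ?(cdist_upper_half m r.+2); try lia.
  have -> : m.*2 - r = (m.*2 - r.+2).+2 by lia.
  have -> : m.*2 - r.+1 = (m.*2 - r.+2).+1 by lia.
  by rewrite addnC sqrn_second_diff.
- rewrite (@eq_cdist _ r.+2 1); last by rewrite (_ : r.+2 = 1 + m.*2) ?modnDr //; lia.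
  rewrite eq_r1_2m (cdist_upper_half m r) ?(cdist_upper_half m m.*2)
    ?(cdist_lower_half m 1) ?(gtn_eqF (_ : m < m.*2)); lia.
Qed.

Lemma cdist_sqr_second_diff m x : 0 < m ->
  cdist m.*2 x.+2 ^ 2 + cdist m.*2 x ^ 2 + (x.+1 == m %[mod m.*2]) * (4 * m) =
  2 * cdist m.*2 x.+1 ^ 2 + 2.
Proof.
move=> m_gt0; set p := m.*2; set r := x %% p.
have lt_rp : r < p by rewrite ltn_pmod // double_gt0.
have shift k : cdist p (x + k) = cdist p (r + k) by apply: eq_cdist; rewrite modnDml.
have antipode : (x.+1 == m %[mod p]) = (r.+1 == m).
  rewrite -addn1 -modnDml -/r addn1 (modn_small (_ : m < p)); last lia.
  have [eq_r1p | lt_r1p] := eqVneq r.+1 p; last by rewrite modn_small //; lia.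
  by rewrite eq_r1p modnn; lia.
rewrite antipode -[x.+2]addn2 -[x.+1]addn1 -[cdist p x]cdist_modn !shift addn1 addn2.
exact: cdist_sqr_second_diff_small.
Qed.

Lemma cdist_eq_antipode m k : k < m.*2 -> (cdist m.*2 k == m) = (k == m).
Proof. by move=> lt_k2m; rewrite cdist_small //; lia. Qed.

Lemma cdist_eq_pred_antipode m k : 1 < m -> k < m.*2 ->
  (cdist m.*2 k == m.-1) = (k == m.-1) || (k == m.+1).
Proof. by move=> lt_1m lt_k2m; rewrite cdist_small //; lia. Qed.

End CyclicDistance.

Section CycleDistSqMx.
Variables (R : realFieldType) (m : nat).
Hypothesis m_ge2 : (2 <= m)%N.
Local Notation p := m.*2.
Local Notation Delta := (cycle_dist_sq_mx R m.*2).

Let p_gt0 : (0 < p)%N. Proof. lia. Qed.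

Definition cycle_dist_sq_sum : R := \sum_(k < p) (cdist p k ^ 2)%:R.
Local Notation s := cycle_dist_sq_sum.
Local Notation J := (const_mx 1 : 'M[R]_p).
Local Notation B1 := (B_mx m (1 : R)).

Lemma sum_col_cycle_dist_sq_mx j : \sum_i Delta i j = s.
Proof.
rewrite /s -(@sum_ord_rot _ p (p - j) (fun x => (cdist p x ^ 2)%:R) p_gt0).
apply: eq_bigr => k _.
by rewrite mxE cycle_distC cycle_distE cdist_modn addnC.
Qed.

Lemma cycle_dist_sq_sum_gt0 : 0 < s.
Proof.
have lt_1p : (1 < p)%N by lia.
rewrite /s (bigD1 (Ordinal lt_1p)) //= cdist_small // ltr_wpDr ?sumr_ge0 //.
by rewrite (_ : minn 1 (p - 1) = 1)%N ?ltr01 //; lia.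
Qed.

Lemma largest_eigenvalue_cycle_dist_sq_mx l : largest_eigenvalue Delta l -> l = s.
Proof.
apply: largest_eigenvalue_colsum p_gt0.
  exact: sum_col_cycle_dist_sq_mx.
by move=> i j; rewrite mxE ler0n.
Qed.

Lemma cycle_dist_sq_mx_mul_const1 : Delta *m J = s *: J.
Proof.
apply/matrixP => i j; rewrite !mxE mulr1 -(sum_col_cycle_dist_sq_mx i).
by apply: eq_bigr => k _; rewrite [const_mx _ _ _]mxE mulr1 !mxE cycle_distC.
Qed.

Lemma B_mx_scale l : B_mx m l = l *: B1.
Proof.
apply/matrixP => i j; rewrite !mxE.
by case: ifP => _; [|case: ifP => _]; rewrite ?mulr0 ?mulr1 ?mulrN1 // mulrC.
Qed.

Lemma antipodal_weight k : (k < p)%N ->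
  (if cdist p k == m then 2 * 1 else if cdist p k == m.-1 then - 1 else 0 : R) =
  2 * (k == m)%:R - (k == m.-1)%:R - (k == m.+1)%:R.
Proof.
move=> lt_kp; rewrite cdist_eq_antipode // cdist_eq_pred_antipode //.
have lt_pm_m : (m.-1 < m)%N by lia.
have [-> | _] := eqVneq k m.
  by rewrite (gtn_eqF lt_pm_m) (ltn_eqF (ltnSn m)) /=; lra.
have [-> | _] /= := eqVneq k m.-1.
  by rewrite (ltn_eqF (ltn_trans lt_pm_m (ltnSn m))) /=; lra.
by case: (k == m.+1); rewrite /=; lra.
Qed.

Lemma cycle_dist_sq_mx_mul_B1 : Delta *m B1 = (4 * m%:R) *: 1%:M - 2 *: J.
Proof.
apply/matrixP => i j; rewrite !mxE.
pose f x : R := (cdist p x ^ 2)%:R.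
pose w x : R :=
  if cdist p x == m then 2 * 1 else if cdist p x == m.-1 then - 1 else 0.
have entry k : Delta i k * B1 k j = f (k + (p - i))%N * w (k + (p - j))%N.
  by rewrite !mxE [cycle_dist k j]cycle_distC !cycle_distE.
have rot (k : 'I_p) :
    f ((j + k) %% p + (p - i))%N * w ((j + k) %% p + (p - j))%N =
    f (j + (p - i) + k)%N *
      (2 * (k == m :> nat)%:R - (k == m.-1 :> nat)%:R - (k == m.+1 :> nat)%:R).
  rewrite -antipodal_weight // /f /w !cdist_modnDl addnAC; congr (_ * _).
  suff -> : cdist p (j + k + (p - j)) = cdist p k by [].
  apply: eq_cdist; rewrite (_ : (j + k + (p - j) = k + p)%N) ?modnDr //.
  by have := ltn_ord j; lia.
(* Shifting the summation index by [j] moves the nonzero entries of column [j]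
   of [B1] to the fixed positions [m] and [m +- 1]. *)
rewrite (eq_bigr _ (fun k _ => entry k)).
rewrite -(@sum_ord_rot _ p j (fun x => f (x + (p - i))%N * w (x + (p - j))%N) p_gt0).
rewrite (eq_bigr _ (fun k _ => rot k)).
under eq_bigr => k _ do rewrite mulrBr mulrBr mulrCA.
rewrite !sumrB -mulr_sumr.
rewrite !(@sum_ord_mul_eqn _ p _ (fun k => f (j + (p - i) + k)%N)); try lia.
have := @cdist_sqr_second_diff m (j + (p - i) + m.-1)%N (ltnW m_ge2).
rewrite -!addnS prednK ?(ltnW m_ge2) // eqn_mod_dvd ?leq_addl // addnK dvdn_ord_sub.
move/(congr1 (fun n => n%:R : R)); rewrite /f !natrD !natrM.
by case: (i == j); rewrite /=; lra.
Qed.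

Lemma cycle_dist_sq_mx_mul_adj : Delta *m (2 *: J + B_mx m s) = (4 * s * m%:R)%:M.
Proof.
rewrite B_mx_scale mulmxDr -!scalemxAr.
rewrite cycle_dist_sq_mx_mul_const1 cycle_dist_sq_mx_mul_B1.
rewrite scalerBr !scalerA [s * 2]mulrC addrC subrK scalemx1.
by congr (_%:M); ring.
Qed.

End CycleDistSqMx.

Theorem lemma6p1 (R : rcfType) (m : nat) (hm : (2 <= m)%N) (l : R) :
  largest_eigenvalue (cycle_dist_sq_mx R m.*2) l ->
  cycle_dist_sq_mx R m.*2 \in unitmx /\
  invmx (cycle_dist_sq_mx R m.*2) =
    (4 * l * m%:R)^-1 *: (2 *: const_mx 1 + B_mx m l).
Proof.
move=> /(largest_eigenvalue_cycle_dist_sq_mx _ _ hm) ->.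
apply: invmx_mulmx_scalar; last exact: cycle_dist_sq_mx_mul_adj.
by rewrite !mulf_neq0 ?pnatr_eq0 ?gt_eqF ?cycle_dist_sq_sum_gt0 //; lia.
Qed.
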